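(* The following cut rules are admissible in $\mathsf{G}(\mathbf{KT}^+_D)$: (Cut$_1$) if $\vdash\emptyset\mid\Gamma\Rightarrow\Delta,\lambda$ and $\vdash\emptyset\mid\lambda,\Gamma'\Rightarrow\Delta'$ then $\vdash\emptyset\mid\Gamma,\Gamma'\Rightarrow\Delta,\Delta'$; (Cut$_2$) if $\vdash\Sigma\mid\Gamma\Rightarrow\Delta,D_G\lambda$ and $\vdash D_G\lambda,\Sigma'\mid\Gamma'\Rightarrow\Delta'$ then $\vdash\Sigma',\Sigma\mid\Gamma,\Gamma'\Rightarrow\Delta,\Delta'$. Here $\Gamma,\Gamma',\Delta,\Delta'$ are arbitrary finite multisets of formulas, $\Sigma,\Sigma'$ finite multisets of outmost-boxed formulas, $\lambda$ a formula and $G\in\mathsf{Grp}$.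
   Context: Language: fix a finite nonempty set $\mathsf{Agt}$ of agents and a countable set $\mathsf{Prop}$ of propositional variables; $\mathsf{Grp}$ is the set of nonempty subsets of $\mathsf{Agt}$. Formulas: $\alpha::=p\mid\bot\mid\alpha\wedge\alpha\mid\alpha\vee\alpha\mid\alpha\rightarrow\alpha\mid\neg\alpha\mid D_G\alpha$ ($p\in\mathsf{Prop}$, $G\in\mathsf{Grp}$). Outmost-boxed formula: one of the form $D_G\gamma$. Calculus $\mathsf{G}(\mathbf{KT}^+_D)$ ($\vdash$ denotes derivability in it, i.e. being the root of a finite tree built from initial sequents by the rules): a T-sequent $\Sigma\mid\Gamma\Rightarrow\Delta$ consists of finite multisets $\Gamma,\Delta$ of formulas and a finite multiset $\Sigma$ of outmost-boxed formulas. Initial sequents: $\Sigma\mid\Gamma,p\Rightarrow p,\Delta$ ($p\in\mathsf{Prop}$) and $\Sigma\mid\bot,\Gamma\Rightarrow\Delta$. Propositional rules (with $\Sigma$ unchanged): $(R\wedge)$ from $\Sigma\mid\Gamma\Rightarrow\Delta,\alpha_1$ and $\Sigma\mid\Gamma\Rightarrow\Delta,\alpha_2$ infer $\Sigma\mid\Gamma\Rightarrow\Delta,\alpha_1\wedge\alpha_2$; $(L\wedge)$ from $\Sigma\mid\alpha_1,\alpha_2,\Gamma\Rightarrow\Delta$ infer $\Sigma\mid\alpha_1\wedge\alpha_2,\Gamma\Rightarrow\Delta$; $(R\vee)$ from $\Sigma\mid\Gamma\Rightarrow\Delta,\alpha_1,\alpha_2$ infer $\Sigma\mid\Gamma\Rightarrow\Delta,\alpha_1\vee\alpha_2$;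 $(L\vee)$ from $\Sigma\mid\alpha_1,\Gamma\Rightarrow\Delta$ and $\Sigma\mid\alpha_2,\Gamma\Rightarrow\Delta$ infer $\Sigma\mid\alpha_1\vee\alpha_2,\Gamma\Rightarrow\Delta$; $(R\rightarrow)$ from $\Sigma\mid\alpha_1,\Gamma\Rightarrow\Delta,\alpha_2$ infer $\Sigma\mid\Gamma\Rightarrow\Delta,\alpha_1\rightarrow\alpha_2$; $(L\rightarrow)$ from $\Sigma\mid\Gamma\Rightarrow\Delta,\alpha_1$ and $\Sigma\mid\alpha_2,\Gamma\Rightarrow\Delta$ infer $\Sigma\mid\alpha_1\rightarrow\alpha_2,\Gamma\Rightarrow\Delta$; $(R\neg)$ from $\Sigma\mid\alpha,\Gamma\Rightarrow\Delta$ infer $\Sigma\mid\Gamma\Rightarrow\Delta,\neg\alpha$; $(L\neg)$ from $\Sigma\mid\Gamma\Rightarrow\Delta,\alpha$ infer $\Sigma\mid\neg\alpha,\Gamma\Rightarrow\Delta$. Modal rules: $(D_K^+)$: from $\emptyset\mid\alpha_1,\dots,\alpha_n\Rightarrow\beta$ ($n\ge0$) infer $\Sigma,D_{G_1}\alpha_1,\dots,D_{G_n}\alpha_n\mid\Pi\Rightarrow D_G\beta,\Omega$, provided $G_i\subseteq G$ for all $i$, $\Sigma$ consists only of formulas $D_H\gamma$ with $H\not\subseteq G$, $\Pi$ only of propositional variables and $\bot$, and $\Omega$ only of propositional variables, $\bot$ and outmost-boxed formulas; $(D_T^+)$: from $D_G\alpha,\Sigma\mid\Gamma,\alpha\Rightarrow\Delta$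 infer $\Sigma\mid\Gamma,D_G\alpha\Rightarrow\Delta$. *)

From HB Require Import structures.
From mathcomp Require Import all_boot.

Set Implicit Arguments.
Unset Strict Implicit.
Unset Printing Implicit Defensive.

Section Calculus.

Variable Agt : finType.

Record grp := Grp { gset : {set Agt}; gset_neq0 : gset != set0 }.
HB.instance Definition _ := [isSub for gset].
HB.instance Definition _ := [Equality of grp by <:].

Inductive form : Type :=
| Var of nat
| Bot
| And of form & form
| Or of form & form
| Imp of form & form
| Neg of form
| Box of grp & form.   (* Box G a  =  D_G a *)

Definition form_eq_dec : comparable form.
Proof.
move=> x y; unfold decidable; decide equality;
  exact: (eq_comparable _ _).
Defined.

HB.instance Definition _ := comparableMixin form_eq_dec.

Definition isBox (a : form) : bool := if a is Box _ _ then true else false.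

Definition notBelow (G : grp) (a : form) : bool :=
  if a is Box H _ then ~~ (gset H \subset gset G) else false.

Definition isAtomBot (a : form) : bool :=
  match a with Var _ | Bot => true | _ => false end.

Definition isAtomBotBox (a : form) : bool :=
  match a with Var _ | Bot | Box _ _ => true | _ => false end.

(* der S Gam Del : the T-sequent  S | Gam => Del  is derivable.
   Multisets are lists; every rule's conclusion may be any permutation
   (perm_eq) of each of its three components. *)
Inductive der : seq form -> seq form -> seq form -> Prop :=
| der_init S Gam Del p S' Gam' Del' :
    all isBox S ->
    perm_eq S' S -> perm_eq Gam' (Var p :: Gam) -> perm_eq Del' (Var p :: Del) ->
    der S' Gam' Del'
| der_bot S Gam Del S' Gam' Del' :
    all isBox S ->
    perm_eq S' S -> perm_eq Gam' (Bot :: Gam) -> perm_eq Del' Del ->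
    der S' Gam' Del'
| der_Rand S Gam Del a1 a2 S' Gam' Del' :
    der S Gam (a1 :: Del) -> der S Gam (a2 :: Del) ->
    perm_eq S' S -> perm_eq Gam' Gam -> perm_eq Del' (And a1 a2 :: Del) ->
    der S' Gam' Del'
| der_Land S Gam Del a1 a2 S' Gam' Del' :
    der S (a1 :: a2 :: Gam) Del ->
    perm_eq S' S -> perm_eq Gam' (And a1 a2 :: Gam) -> perm_eq Del' Del ->
    der S' Gam' Del'
| der_Ror S Gam Del a1 a2 S' Gam' Del' :
    der S Gam (a1 :: a2 :: Del) ->
    perm_eq S' S -> perm_eq Gam' Gam -> perm_eq Del' (Or a1 a2 :: Del) ->
    der S' Gam' Del'
| der_Lor S Gam Del a1 a2 S' Gam' Del' :
    der S (a1 :: Gam) Del -> der S (a2 :: Gam) Del ->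
    perm_eq S' S -> perm_eq Gam' (Or a1 a2 :: Gam) -> perm_eq Del' Del ->
    der S' Gam' Del'
| der_Rimp S Gam Del a1 a2 S' Gam' Del' :
    der S (a1 :: Gam) (a2 :: Del) ->
    perm_eq S' S -> perm_eq Gam' Gam -> perm_eq Del' (Imp a1 a2 :: Del) ->
    der S' Gam' Del'
| der_Limp S Gam Del a1 a2 S' Gam' Del' :
    der S Gam (a1 :: Del) -> der S (a2 :: Gam) Del ->
    perm_eq S' S -> perm_eq Gam' (Imp a1 a2 :: Gam) -> perm_eq Del' Del ->
    der S' Gam' Del'
| der_Rneg S Gam Del a S' Gam' Del' :
    der S (a :: Gam) Del ->
    perm_eq S' S -> perm_eq Gam' Gam -> perm_eq Del' (Neg a :: Del) ->
    der S' Gam' Del'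
| der_Lneg S Gam Del a S' Gam' Del' :
    der S Gam (a :: Del) ->
    perm_eq S' S -> perm_eq Gam' (Neg a :: Gam) -> perm_eq Del' Del ->
    der S' Gam' Del'
(* (D_K^+): from  0 | a_1..a_n => b  infer
   S, D_{G_1}a_1, ..., D_{G_n}a_n | Pi => D_G b, Om *)
| der_DK (bs : seq (grp * form)) b G S Pi Om S' Gam' Del' :
    der [::] (map snd bs) [:: b] ->
    all (fun p => gset p.1 \subset gset G) bs ->
    all (notBelow G) S -> all isAtomBot Pi -> all isAtomBotBox Om ->
    perm_eq S' (S ++ map (fun p => Box p.1 p.2) bs) ->
    perm_eq Gam' Pi -> perm_eq Del' (Box G b :: Om) ->
    der S' Gam' Del'
| der_DT S Gam Del G a S' Gam' Del' :
    der (Box G a :: S) (a :: Gam) Del ->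
    perm_eq S' S -> perm_eq Gam' (Box G a :: Gam) -> perm_eq Del' Del ->
    der S' Gam' Del'.

End Calculus.

From HB Require Import structures.
From mathcomp Require Import all_boot zify.

Set Implicit Arguments.
Unset Strict Implicit.
Unset Printing Implicit Defensive.

(** Cut is eliminated by induction on the cut formula, after weakening, contraction
    and the inverses of the propositional rules and of (D_T^+) have been shown
    admissible.  A propositional cut formula is split by inverting both premises and
    cutting on its immediate subformulas, followed by contractions; an atomic one is
    traced up the left derivation to the axioms that introduce it.  For [D_K c],
    inverting (D_T^+) moves [D_K c] from the antecedent into Sigma, where only (D_K^+)
    can use it; a cut there (Cut_2) reduces to a cut on [c] between the two (D_K^+)
    premises.  Finally (D_T^+) is admissible in the succedent
    ([Sigma | Gamma => D_H c, Delta] yields [Sigma | bodies(Sigma), Gamma => c, Delta]),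
    which supplies the left premise of the last cut on [c]. *)

Ltac perm_solve :=
  let f := fresh "f" in
  apply/permP; intro f;
  repeat match goal with H : is_true (perm_eq _ _) |- _ => move: (permP H f); clear H end;
  rewrite /=; repeat (rewrite count_cat /=); lia.

Lemma perm_cons_split (T : eqType) (x y : T) s t : perm_eq (x :: s) (y :: t) ->
  (x = y /\ perm_eq s t) \/ exists r, perm_eq s (y :: r) /\ perm_eq t (x :: r).
Proof.
case: (eqVneq x y) => [<- | ne] p; first by left; rewrite perm_cons in p.
have ys : y \in s by move: (perm_mem p y); rewrite !inE eqxx eq_sym (negbTE ne).
by right; exists (rem y s); have := perm_to_rem ys; split=> //; perm_solve.
Qed.

Lemma perm_cons_dup (T : eqType) (x y : T) s t : perm_eq (x :: s) (y :: y :: t) -> x != y ->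
  exists r, perm_eq s (y :: y :: r) /\ perm_eq t (x :: r).
Proof.
move=> p ne; have [[/eqP] | [r1 [p1 q1]]] := perm_cons_split p; first by rewrite (negbTE ne).
have [[/eqP] | [r [p2 q2]]] := perm_cons_split q1; first by rewrite eq_sym (negbTE ne).
by exists r; split; perm_solve.
Qed.

Lemma perm_mem_dup (T : eqType) (x y : T) s t : perm_eq (x :: s) (y :: y :: t) -> x \in y :: t.
Proof. by move/perm_mem/(_ x); rewrite !inE eqxx orbA orbb => <-. Qed.

Section Calculus.

Variable Agt : finType.
Local Notation form := (form Agt).
Local Notation der := (@der Agt).
Local Notation Var := (@Var Agt).
Local Notation Bot := (@Bot Agt).
Local Notation isBox := (@isBox Agt).
Local Notation isAtomBot := (@isAtomBot Agt).
Local Notation isAtomBotBox := (@isAtomBotBox Agt).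
Implicit Types (S G D Pi Om : seq form) (a b c A X : form) (K H : grp Agt).

(** * Rules in canonical form *)

Lemma der_perm S G D S' G' D' :
  der S G D -> perm_eq S' S -> perm_eq G' G -> perm_eq D' D -> der S' G' D'.
Proof.
move=> d pS pG pD; case: d pS pG pD => *;
  [ eapply der_init | eapply der_bot | eapply der_Rand | eapply der_Land
  | eapply der_Ror | eapply der_Lor | eapply der_Rimp | eapply der_Limp
  | eapply der_Rneg | eapply der_Lneg | eapply der_DK | eapply der_DT ];
  revgoals; try match goal with
  | p : is_true (perm_eq ?X _) |- is_true (perm_eq ?X _) => apply: (perm_trans p)
  end; eassumption.
Qed.

Lemma der_init_mem p S G D : all isBox S -> Var p \in G -> Var p \in D -> der S G D.
Proof. by move=> hS hG hD; apply: der_init hS (perm_refl S) (perm_to_rem hG) (perm_to_rem hD). Qed.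

Lemma der_bot_mem S G D : all isBox S -> Bot \in G -> der S G D.
Proof. by move=> hS hG; apply: der_bot hS (perm_refl S) (perm_to_rem hG) (perm_refl D). Qed.

Lemma der_T K a S G D : der (Box K a :: S) (a :: G) D -> der S (Box K a :: G) D.
Proof. by move=> d; apply: der_DT d _ _ _. Qed.

Definition lprem (Q : seq form -> seq form -> seq form -> Prop) A S G D : Prop :=
  match A with
  | And a1 a2 => Q S (a1 :: a2 :: G) D
  | Or a1 a2 => Q S (a1 :: G) D /\ Q S (a2 :: G) D
  | Imp a1 a2 => Q S G (a1 :: D) /\ Q S (a2 :: G) D
  | Neg a => Q S G (a :: D)
  | _ => False
  end.

Definition rprem (Q : seq form -> seq form -> seq form -> Prop) A S G D : Prop :=
  match A with
  | And a1 a2 => Q S G (a1 :: D) /\ Q S G (a2 :: D)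
  | Or a1 a2 => Q S G (a1 :: a2 :: D)
  | Imp a1 a2 => Q S (a1 :: G) (a2 :: D)
  | Neg a => Q S (a :: G) D
  | _ => False
  end.

Lemma der_lprem A S G D : lprem der A S G D -> der S (A :: G) D.
Proof.
case: A => //= [a1 a2 d | a1 a2 [d1 d2] | a1 a2 [d1 d2] | a d].
- exact: der_Land d _ _ _.
- exact: der_Lor d1 d2 _ _ _.
- exact: der_Limp d1 d2 _ _ _.
- exact: der_Lneg d _ _ _.
Qed.

Lemma der_rprem A S G D : rprem der A S G D -> der S G (A :: D).
Proof.
case: A => //= [a1 a2 [d1 d2] | a1 a2 d | a1 a2 d | a d].
- exact: der_Rand d1 d2 _ _ _.
- exact: der_Ror d _ _ _.
- exact: der_Rimp d _ _ _.
- exact: der_Rneg d _ _ _.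
Qed.

Lemma lprem_ctx (Q Q' : seq form -> seq form -> seq form -> Prop) A S G D S' G' D' :
  (forall Ga Da, Q S (Ga ++ G) (Da ++ D) -> Q' S' (Ga ++ G') (Da ++ D')) ->
  lprem Q A S G D -> lprem Q' A S' G' D'.
Proof.
move=> h; case: A => //= [a1 a2 | a1 a2 [h1 h2] | a1 a2 [h1 h2] | a].
- exact: (h [:: a1; a2] [::]).
- by split; [apply: (h [:: a1] [::]) | apply: (h [:: a2] [::])].
- by split; [apply: (h [::] [:: a1]) | apply: (h [:: a2] [::])].
- exact: (h [::] [:: a]).
Qed.

Lemma rprem_ctx (Q Q' : seq form -> seq form -> seq form -> Prop) A S G D S' G' D' :
  (forall Ga Da, Q S (Ga ++ G) (Da ++ D) -> Q' S' (Ga ++ G') (Da ++ D')) ->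
  rprem Q A S G D -> rprem Q' A S' G' D'.
Proof.
move=> h; case: A => //= [a1 a2 [h1 h2] | a1 a2 | a1 a2 | a].
- by split; [apply: (h [::] [:: a1]) | apply: (h [::] [:: a2])].
- exact: (h [::] [:: a1; a2]).
- exact: (h [:: a1] [:: a2]).
- exact: (h [:: a] [::]).
Qed.

(** The premise of (D_K^+) is determined by its conclusion: its antecedent consists of
    the bodies of exactly those boxes [D_H a] of Sigma with [H] included in [K]. *)
Definition below K x : bool := if x is Box H _ then gset H \subset gset K else false.
Definition body x : form := if x is Box _ a then a else x.
Definition bodies_below K S := [seq body x | x <- S & below K x].

Lemma bodies_below_cat K S S' :
  bodies_below K (S ++ S') = bodies_below K S ++ bodies_below K S'.
Proof. by rewrite /bodies_below filter_cat map_cat. Qed.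

Lemma bodies_below_perm K S S' : perm_eq S S' -> perm_eq (bodies_below K S) (bodies_below K S').
Proof. by move=> h; apply/perm_map/perm_filter. Qed.

Lemma bodies_below_cons K x S :
  bodies_below K (x :: S) = if below K x then body x :: bodies_below K S else bodies_below K S.
Proof. by rewrite /bodies_below /=; case: (below K x). Qed.

Lemma boxes_split K S : all isBox S ->
  exists bs Sn, [/\ perm_eq S (Sn ++ [seq Box p.1 p.2 | p <- bs]), all (notBelow K) Sn,
                    all (fun p => gset p.1 \subset gset K) bs & map snd bs = bodies_below K S].
Proof.
elim: S => [_|x S IH]; first by exists [::], [::].
case: x => // H a /= /IH [bs [Sn [pS hSn hbs ebs]]].
rewrite bodies_below_cons /=; case: ifP => hH.
- exists ((H, a) :: bs), Sn; rewrite /= hH ebs; split=> //; perm_solve.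
- by exists bs, (Box H a :: Sn); rewrite /= hH perm_cons.
Qed.

Lemma der_K K b S Pi Om :
  all isBox S -> all isAtomBot Pi -> all isAtomBotBox Om ->
  der [::] (bodies_below K S) [:: b] -> der S Pi (Box K b :: Om).
Proof.
move=> /(boxes_split K) [bs [Sn [pS hSn hbs ebs]]] hPi hOm d.
by apply: (@der_DK _ bs b K Sn Pi Om) hbs hSn hPi hOm pS _ _; rewrite ?ebs.
Qed.

Lemma bodies_below_DK K bs S S' :
  all (fun p => gset p.1 \subset gset K) bs -> all (notBelow K) S ->
  perm_eq S' (S ++ [seq Box p.1 p.2 | p <- bs]) ->
  perm_eq (bodies_below K S') (map snd bs) /\ all isBox S'.
Proof.
move=> hbs hS pS; split; last first.
  by rewrite (perm_all _ pS) all_cat all_map; apply/andP; split;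
    [apply: sub_all hS => -[] | elim: bs {hbs pS}].
apply: perm_trans (bodies_below_perm K pS) _; rewrite bodies_below_cat.
have -> : bodies_below K S = [::].
  by elim: S hS {pS} => //= -[] // H a S IH /andP [/negbTE hH /IH]; rewrite bodies_below_cons /= hH.
suff -> : bodies_below K [seq Box p.1 p.2 | p <- bs] = map snd bs by [].
by elim: bs hbs {pS} => //= -[H a] bs IH /andP [/= hH /IH]; rewrite bodies_below_cons /= hH => ->.
Qed.

Lemma der_canon_ind (P : seq form -> seq form -> seq form -> Prop) :
  (forall S G D S' G' D', perm_eq S' S -> perm_eq G' G -> perm_eq D' D -> P S G D -> P S' G' D') ->
  (forall p S G D, all isBox S -> P S (Var p :: G) (Var p :: D)) ->
  (forall S G D, all isBox S -> P S (Bot :: G) D) ->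
  (forall A S G D, lprem (fun S G D => der S G D /\ P S G D) A S G D -> P S (A :: G) D) ->
  (forall A S G D, rprem (fun S G D => der S G D /\ P S G D) A S G D -> P S G (A :: D)) ->
  (forall K a S G D, der (Box K a :: S) (a :: G) D -> P (Box K a :: S) (a :: G) D ->
     P S (Box K a :: G) D) ->
  (forall K b S Pi Om, all isBox S -> all isAtomBot Pi -> all isAtomBotBox Om ->
     der [::] (bodies_below K S) [:: b] -> P S Pi (Box K b :: Om)) ->
  forall S G D, der S G D -> P S G D.
Proof.
move=> Pperm Pinit Pbot PL PR PT PK S G D.
elim=> {S G D} [S G D p S' G' D' hS pS pG pD
 | S G D S' G' D' hS pS pG pD
 | S G D a1 a2 S' G' D' d1 IH1 d2 IH2 pS pG pD
 | S G D a1 a2 S' G' D' d IH pS pG pD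
 | S G D a1 a2 S' G' D' d IH pS pG pD
 | S G D a1 a2 S' G' D' d1 IH1 d2 IH2 pS pG pD
 | S G D a1 a2 S' G' D' d IH pS pG pD
 | S G D a1 a2 S' G' D' d1 IH1 d2 IH2 pS pG pD
 | S G D a S' G' D' d IH pS pG pD
 | S G D a S' G' D' d IH pS pG pD
 | bs b K S Pi Om S' G' D' d _ hbs hS hPi hOm pS pG pD
 | S G D K a S' G' D' d IH pS pG pD].
- exact: Pperm pS pG pD (Pinit _ _ _ _ hS).
- exact: Pperm pS pG pD (Pbot _ _ _ hS).
- by apply: Pperm pS pG pD (PR (And a1 a2) _ _ _ _).
- by apply: Pperm pS pG pD (PL (And a1 a2) _ _ _ _).
- by apply: Pperm pS pG pD (PR (Or a1 a2) _ _ _ _).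
- by apply: Pperm pS pG pD (PL (Or a1 a2) _ _ _ _).
- by apply: Pperm pS pG pD (PR (Imp a1 a2) _ _ _ _).
- by apply: Pperm pS pG pD (PL (Imp a1 a2) _ _ _ _).
- by apply: Pperm pS pG pD (PR (Neg a) _ _ _ _).
- by apply: Pperm pS pG pD (PL (Neg a) _ _ _ _).
- have [pB hS'] := bodies_below_DK hbs hS pS.
  apply: Pperm _ _ _ _ _ _ (perm_refl S') pG pD (PK _ _ _ _ _ hS' hPi hOm _).
  exact: der_perm d (perm_refl _) pB (perm_refl _).
- exact: Pperm pS pG pD (PT _ _ _ _ _ d IH).
Qed.

Lemma der_boxes S G D : der S G D -> all isBox S.
Proof.
move: S G D; apply: der_canon_ind => //.
- by move=> S G D S' G' D' pS _ _; rewrite (perm_all _ pS).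
- by move=> [] //= *; tauto.
- by move=> [] //= *; tauto.
Qed.

Lemma lprem_compound Q A S G D : lprem Q A S G D -> ~~ isAtomBotBox A.
Proof. by case: A. Qed.

Lemma rprem_compound Q A S G D : rprem Q A S G D -> ~~ isAtomBotBox A.
Proof. by case: A. Qed.

(** * Weakening *)

Lemma der_weaken_base S1 G1 D1 :
  all isBox S1 -> all isAtomBot G1 -> all isAtomBotBox D1 ->
  (forall K Gam b, der [::] Gam [:: b] -> der [::] (bodies_below K S1 ++ Gam) [:: b]) ->
  forall S G D, der S G D -> der (S1 ++ S) (G1 ++ G) (D1 ++ D).
Proof.
move=> hS1 hG1 hD1 hW; apply: der_canon_ind.
- by move=> S G D S' G' D' pS pG pD d; apply: der_perm d _ _ _; perm_solve.
- move=> p S G D hS.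
  by apply: (@der_init_mem p); rewrite ?all_cat ?hS1 ?hS ?mem_cat ?inE ?eqxx ?orbT.
- move=> S G D hS.
  by apply: der_bot_mem; rewrite ?all_cat ?hS1 ?hS ?mem_cat ?inE ?eqxx ?orbT.
- move=> A S G D hA.
  have h : lprem der A (S1 ++ S) (G1 ++ G) (D1 ++ D).
    by apply: lprem_ctx hA => Ga Da [_ d]; apply: der_perm d _ _ _; perm_solve.
  by apply: der_perm (der_lprem h) _ _ _; perm_solve.
- move=> A S G D hA.
  have h : rprem der A (S1 ++ S) (G1 ++ G) (D1 ++ D).
    by apply: rprem_ctx hA => Ga Da [_ d]; apply: der_perm d _ _ _; perm_solve.
  by apply: der_perm (der_rprem h) _ _ _; perm_solve.
- move=> K a S G D _ d.
  have h : der (Box K a :: S1 ++ S) (a :: G1 ++ G) (D1 ++ D) by apply: der_perm d _ _ _; perm_solve.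
  by apply: der_perm (der_T h) _ _ _; perm_solve.
- move=> K b S Pi Om hS hPi hOm d.
  have h : der (S1 ++ S) (G1 ++ Pi) (Box K b :: D1 ++ Om).
    by apply: der_K; rewrite ?all_cat ?hS1 ?hS ?hG1 ?hPi ?hD1 ?hOm ?bodies_below_cat //; apply: hW.
  by apply: der_perm h _ _ _; perm_solve.
Qed.

Lemma der_weaken_atoms G1 D1 S G D :
  all isAtomBot G1 -> all isAtomBotBox D1 -> der S G D -> der S (G1 ++ G) (D1 ++ D).
Proof. by move=> hG1 hD1; apply: (@der_weaken_base [::]). Qed.

Lemma der_weakS_box H c S G D :
  (forall Gam b, der [::] Gam [:: b] -> der [::] (c :: Gam) [:: b]) ->
  der S G D -> der (Box H c :: S) G D.
Proof.
move=> hc; apply: (@der_weaken_base [:: Box H c] [::] [::]) => // K Gam b d.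
by rewrite bodies_below_cons /=; case: ifP => _ //; apply: hc.
Qed.

Lemma der_weak A :
  (forall S G D, der S G D -> der S (A :: G) D) /\ (forall S G D, der S G D -> der S G (A :: D)).
Proof.
elim: A => [p | | a [La Ra] b [Lb Rb] | a [La Ra] b [Lb Rb] | a [La Ra] b [Lb Rb] | a [La Ra]
           | H c [Lc Rc]]; split=> S G D d.
- exact: (@der_weaken_atoms [:: Var p] [::]).
- exact: (@der_weaken_atoms [::] [:: Var p]).
- exact: (@der_weaken_atoms [:: Bot] [::]).
- exact: (@der_weaken_atoms [::] [:: Bot]).
- by apply: der_lprem; apply: La; apply: Lb.
- by apply: der_rprem; split; [apply: Ra | apply: Rb].
- by apply: der_lprem; split; [apply: La | apply: Lb].
- by apply: der_rprem; apply: Ra; apply: Rb.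
- by apply: der_lprem; split; [apply: Ra | apply: Lb].
- by apply: der_rprem; apply: La; apply: Rb.
- by apply: der_lprem; apply: Ra.
- by apply: der_rprem; apply: La.
- by apply/der_T/der_weakS_box; [move=> Gam b; apply: Lc | apply: Lc].
- exact: (@der_weaken_atoms [::] [:: Box H c]).
Qed.

Lemma der_weakL A S G D : der S G D -> der S (A :: G) D.
Proof. exact: (der_weak A).1. Qed.

Lemma der_weakR A S G D : der S G D -> der S G (A :: D).
Proof. exact: (der_weak A).2. Qed.

Lemma der_weaken S1 G1 D1 S G D :
  all isBox S1 -> der S G D -> der (S1 ++ S) (G1 ++ G) (D1 ++ D).
Proof.
move=> hS1 d.
have dGD : der S (G1 ++ G) (D1 ++ D).
  elim: G1 => [|A G1 IH]; last exact: der_weakL.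
  by elim: D1 => // B D1 IH; apply: der_weakR.
elim: S1 hS1 => // -[] // H c S1 IH /= /IH.
by apply: der_weakS_box => Gam b; apply: der_weakL.
Qed.

(** * Invertibility *)

(** Removing [X] while adding a context commutes with every rule in which [X] is not
    principal, so only the principal cases remain as hypotheses. *)
Lemma der_ante_elim X S1 L M S G D :
  ~~ isAtomBot X -> all isBox S1 ->
  (forall S G D, lprem der X S G D -> der (S1 ++ S) (L ++ G) (M ++ D)) ->
  (forall K a S G D, X = Box K a -> der (Box K a :: S) (a :: G) D ->
     der (S1 ++ S) (L ++ G) (M ++ D)) ->
  der S (X :: G) D -> der (S1 ++ S) (L ++ G) (M ++ D).
Proof.
move=> hX hS1 hL hT d.
suff gen : forall S G' D, der S G' D -> forall G, perm_eq G' (X :: G) ->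
    der (S1 ++ S) (L ++ G) (M ++ D) by exact: gen _ _ _ d _ (perm_refl _).
clear d S G D; apply: der_canon_ind.
- by move=> S G D S' G' D' pS pG pD IH G0 pG0; apply: der_perm (IH G0 _) _ _ _; perm_solve.
- move=> p S G D hS G0 /perm_cons_split [[eX _] | [r [_ pr]]]; first by rewrite -eX in hX.
  by apply: (@der_init_mem p); rewrite ?all_cat ?hS1 ?hS ?mem_cat ?(perm_mem pr) ?inE ?eqxx ?orbT.
- move=> S G D hS G0 /perm_cons_split [[eX _] | [r [_ pr]]]; first by rewrite -eX in hX.
  by apply: der_bot_mem; rewrite ?all_cat ?hS1 ?hS ?mem_cat ?(perm_mem pr) ?inE ?eqxx ?orbT.
- move=> A S G D hA G0 /perm_cons_split [[eA pG] | [r [pG pr]]].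
  + have d : lprem der X S G D by rewrite -eA; apply: lprem_ctx hA => Ga Da [].
    by apply: der_perm (hL _ _ _ d) _ _ _; perm_solve.
  + have h : lprem der A (S1 ++ S) (L ++ r) (M ++ D).
      apply: lprem_ctx hA => Ga Da [_ IH].
      by apply: der_perm (IH (Ga ++ r) _) _ _ _; perm_solve.
    by apply: der_perm (der_lprem h) _ _ _; perm_solve.
- move=> A S G D hA G0 pG.
  have h : rprem der A (S1 ++ S) (L ++ G0) (M ++ D).
    apply: rprem_ctx hA => Ga Da [_ IH].
    by apply: der_perm (IH (Ga ++ G0) _) _ _ _; perm_solve.
  by apply: der_perm (der_rprem h) _ _ _; perm_solve.
- move=> K a S G D d IH G0 /perm_cons_split [[eX pG] | [r [pG pr]]].
  + by apply: der_perm (hT _ _ _ _ _ (esym eX) d) _ _ _; perm_solve.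
  + have h : der (Box K a :: S1 ++ S) (a :: L ++ r) (M ++ D).
      by apply: der_perm (IH (a :: r) _) _ _ _; perm_solve.
    by apply: der_perm (der_T h) _ _ _; perm_solve.
- move=> K b S Pi Om _ hPi _ _ G0 pPi.
  by move: hPi; rewrite (perm_all _ pPi) /= (negbTE hX).
Qed.

Lemma der_succ_elim X S1 G1 D1 S G D :
  all isBox S1 ->
  (forall p S G D, X = Var p -> all isBox S -> der (S1 ++ S) (G1 ++ Var p :: G) (D1 ++ D)) ->
  (forall S G D, rprem der X S G D -> der (S1 ++ S) (G1 ++ G) (D1 ++ D)) ->
  (forall K b S Pi Om, X = Box K b -> all isBox S -> all isAtomBot Pi -> all isAtomBotBox Om ->
     der [::] (bodies_below K S) [:: b] -> der (S1 ++ S) (G1 ++ Pi) (D1 ++ Om)) ->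
  der S G (X :: D) -> der (S1 ++ S) (G1 ++ G) (D1 ++ D).
Proof.
move=> hS1 hI hR hK d.
suff gen : forall S G D', der S G D' -> forall D, perm_eq D' (X :: D) ->
    der (S1 ++ S) (G1 ++ G) (D1 ++ D) by exact: gen _ _ _ d _ (perm_refl _).
clear d S G D; apply: der_canon_ind.
- by move=> S G D S' G' D' pS pG pD IH D0 pD0; apply: der_perm (IH D0 _) _ _ _; perm_solve.
- move=> p S G D hS D0 /perm_cons_split [[eX pD] | [r [_ pr]]].
  + by apply: der_perm (hI p S G D (esym eX) hS) _ _ _; perm_solve.
  + by apply: (@der_init_mem p); rewrite ?all_cat ?hS1 ?hS ?mem_cat ?(perm_mem pr) ?inE ?eqxx ?orbT.
- move=> S G D hS D0 _.
  by apply: der_bot_mem; rewrite ?all_cat ?hS1 ?hS ?mem_cat ?inE ?eqxx ?orbT.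
- move=> A S G D hA D0 pD.
  have h : lprem der A (S1 ++ S) (G1 ++ G) (D1 ++ D0).
    apply: lprem_ctx hA => Ga Da [_ IH].
    by apply: der_perm (IH (Da ++ D0) _) _ _ _; perm_solve.
  by apply: der_perm (der_lprem h) _ _ _; perm_solve.
- move=> A S G D hA D0 /perm_cons_split [[eA pD] | [r [pD pr]]].
  + have d : rprem der X S G D by rewrite -eA; apply: rprem_ctx hA => Ga Da [].
    by apply: der_perm (hR _ _ _ d) _ _ _; perm_solve.
  + have h : rprem der A (S1 ++ S) (G1 ++ G) (D1 ++ r).
      apply: rprem_ctx hA => Ga Da [_ IH].
      by apply: der_perm (IH (Da ++ r) _) _ _ _; perm_solve.
    by apply: der_perm (der_rprem h) _ _ _; perm_solve.
- move=> K a S G D _ IH D0 pD.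
  have h : der (Box K a :: S1 ++ S) (a :: G1 ++ G) (D1 ++ D0).
    by apply: der_perm (IH D0 _) _ _ _; perm_solve.
  by apply: der_perm (der_T h) _ _ _; perm_solve.
- move=> K b S Pi Om hS hPi hOm d D0 /perm_cons_split [[eX pOm] | [r [pOm pr]]].
  + by apply: der_perm (hK _ _ _ _ _ (esym eX) hS hPi hOm d) _ _ _; perm_solve.
  + have hr : all isAtomBotBox r by move: hOm; rewrite (perm_all _ pOm) => /andP [].
    have := der_weaken G1 D1 hS1 (der_K hS hPi hr d).
    by move/der_perm; apply; perm_solve.
Qed.

Lemma der_lprem_inv A S G D : der S (A :: G) D -> ~~ isAtomBotBox A -> lprem der A S G D.
Proof.
move=> d hA.
have inv L M : (forall S G D, lprem der A S G D -> der S (L ++ G) (M ++ D)) ->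
    der S (L ++ G) (M ++ D).
  move=> hL; apply: (@der_ante_elim A [::] L M) d => //; first by case: A hA {hL}.
  by move=> K a S' G' D' eA; rewrite eA in hA.
case: A hA d inv => //= [a1 a2 | a1 a2 | a1 a2 | a] _ _ inv.
- by apply: (inv [:: a1; a2] [::]) => ? ? ?.
- by split; [apply: (inv [:: a1] [::]) | apply: (inv [:: a2] [::])] => ? ? ? [].
- by split; [apply: (inv [::] [:: a1]) | apply: (inv [:: a2] [::])] => ? ? ? [].
- by apply: (inv [::] [:: a]) => ? ? ?.
Qed.

Lemma der_rprem_inv A S G D : der S G (A :: D) -> ~~ isAtomBotBox A -> rprem der A S G D.
Proof.
move=> d hA.
have inv L M : (forall S G D, rprem der A S G D -> der S (L ++ G) (M ++ D)) ->
    der S (L ++ G) (M ++ D).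
  move=> hR; apply: (@der_succ_elim A [::] L M) d => //.
  - by move=> p S' G' D' eA; rewrite eA in hA.
  - by move=> K b S' Pi Om eA; rewrite eA in hA.
case: A hA d inv => //= [a1 a2 | a1 a2 | a1 a2 | a] _ _ inv.
- by split; [apply: (inv [::] [:: a1]) | apply: (inv [::] [:: a2])] => ? ? ? [].
- by apply: (inv [::] [:: a1; a2]) => ? ? ?.
- by apply: (inv [:: a1] [:: a2]) => ? ? ?.
- by apply: (inv [:: a] [::]) => ? ? ?.
Qed.

Lemma der_T_inv K a S G D : der S (Box K a :: G) D -> der (Box K a :: S) (a :: G) D.
Proof.
move=> d; apply: (@der_ante_elim (Box K a) [:: Box K a] [:: a] [::]) d => //.
by move=> K' a' S' G' D' [-> ->].
Qed.

(** * Contraction *)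

Lemma compound_neq_atom A B : ~~ isAtomBotBox A -> isAtomBotBox B -> A != B.
Proof. by move=> hA hB; apply: contraNneq hA => ->. Qed.

Lemma der_contrL_atom A S G D : isAtomBot A -> der S (A :: A :: G) D -> der S (A :: G) D.
Proof.
move=> hA; have hA' : isAtomBotBox A by case: A hA.
move=> d.
suff gen : forall S G' D, der S G' D -> forall G, perm_eq G' (A :: A :: G) ->
    der S (A :: G) D by exact: gen _ _ _ d _ (perm_refl _).
clear d S G D; apply: der_canon_ind.
- by move=> S G D S' G' D' pS pG pD IH G0 pG0; apply: der_perm (IH G0 _) _ _ _; perm_solve.
- by move=> p S G D hS G0 /perm_mem_dup hp; apply: (@der_init_mem p) => //; rewrite inE eqxx.
- by move=> S G D hS G0 /perm_mem_dup; apply: der_bot_mem.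
- move=> B S G D hB G0 pG0.
  have [r [pG pr]] := perm_cons_dup pG0 (compound_neq_atom (lprem_compound hB) hA').
  have h : lprem der B S (A :: r) D.
    apply: lprem_ctx hB => Ga Da [_ IH].
    by apply: der_perm (IH (Ga ++ r) _) _ _ _; perm_solve.
  by apply: der_perm (der_lprem h) _ _ _; perm_solve.
- move=> B S G D hB G0 pG.
  have h : rprem der B S (A :: G0) D.
    apply: rprem_ctx hB => Ga Da [_ IH].
    by apply: der_perm (IH (Ga ++ G0) _) _ _ _; perm_solve.
  by apply: der_perm (der_rprem h) _ _ _; perm_solve.
- move=> K a S G D _ IH G0 pG0.
  have ne : Box K a != A by apply: contraTneq hA => <-.
  have [r [pG pr]] := perm_cons_dup pG0 ne.
  have h : der (Box K a :: S) (a :: A :: r) D by apply: der_perm (IH (a :: r) _) _ _ _; perm_solve.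
  by apply: der_perm (der_T h) _ _ _; perm_solve.
- move=> K b S Pi Om hS hPi hOm d G0 pPi.
  by apply: der_K => //; move: hPi; rewrite (perm_all _ pPi) => /andP [].
Qed.

Lemma der_contrR_atom A S G D : isAtomBotBox A -> der S G (A :: A :: D) -> der S G (A :: D).
Proof.
move=> hA d.
suff gen : forall S G D', der S G D' -> forall D, perm_eq D' (A :: A :: D) ->
    der S G (A :: D) by exact: gen _ _ _ d _ (perm_refl _).
clear d S G D; apply: der_canon_ind.
- by move=> S G D S' G' D' pS pG pD IH D0 pD0; apply: der_perm (IH D0 _) _ _ _; perm_solve.
- by move=> p S G D hS D0 /perm_mem_dup hp; apply: (@der_init_mem p) => //; rewrite inE eqxx.
- by move=> S G D hS D0 _; apply: der_bot_mem; rewrite // inE eqxx.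
- move=> B S G D hB D0 pD.
  have h : lprem der B S G (A :: D0).
    apply: lprem_ctx hB => Ga Da [_ IH].
    by apply: der_perm (IH (Da ++ D0) _) _ _ _; perm_solve.
  by apply: der_perm (der_lprem h) _ _ _; perm_solve.
- move=> B S G D hB D0 pD0.
  have [r [pD pr]] := perm_cons_dup pD0 (compound_neq_atom (rprem_compound hB) hA).
  have h : rprem der B S G (A :: r).
    apply: rprem_ctx hB => Ga Da [_ IH].
    by apply: der_perm (IH (Da ++ r) _) _ _ _; perm_solve.
  by apply: der_perm (der_rprem h) _ _ _; perm_solve.
- move=> K a S G D _ IH D0 pD.
  have h : der (Box K a :: S) (a :: G) (A :: D0) by apply: IH.
  exact: der_T h.
- move=> K b S Pi Om hS hPi hOm d D0 pOm0.
  have [eA | ne] := eqVneq (Box K b) A.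
  + rewrite -eA perm_cons in pOm0; rewrite -eA.
    by apply: der_K => //; move: hOm; rewrite (perm_all _ pOm0) => /andP [].
  + have [r [pOm pr]] := perm_cons_dup pOm0 ne.
    have hr : all isAtomBotBox (A :: A :: r) by rewrite -(perm_all _ pOm).
    apply: der_perm (der_K (Om := A :: r) hS hPi _ d) _ _ _; first by case/andP: hr.
    all: perm_solve.
Qed.

Lemma der_contrS H c S G D :
  (forall Gam b, der [::] (c :: c :: Gam) [:: b] -> der [::] (c :: Gam) [:: b]) ->
  der (Box H c :: Box H c :: S) G D -> der (Box H c :: S) G D.
Proof.
move=> hc d.
suff gen : forall S' G D, der S' G D -> forall S, perm_eq S' (Box H c :: Box H c :: S) ->
    der (Box H c :: S) G D by exact: gen _ _ _ d _ (perm_refl _).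
clear d S G D.
have boxes S S' : perm_eq S' (Box H c :: Box H c :: S) -> all isBox S' -> all isBox (Box H c :: S).
  by move=> pS; rewrite (perm_all _ pS) => /andP [].
apply: der_canon_ind.
- by move=> S G D S' G' D' pS pG pD IH S0 pS0; apply: der_perm (IH S0 _) _ _ _; perm_solve.
- move=> p S G D hS S0 /boxes /(_ hS) hS0.
  by apply: (@der_init_mem p); rewrite ?inE ?eqxx.
- by move=> S G D hS S0 /boxes /(_ hS) hS0; apply: der_bot_mem; rewrite ?inE ?eqxx.
- move=> B S G D hB S0 pS.
  have h : lprem der B (Box H c :: S0) G D by apply: lprem_ctx hB => Ga Da [_]; apply.
  exact: der_lprem h.
- move=> B S G D hB S0 pS.
  have h : rprem der B (Box H c :: S0) G D by apply: rprem_ctx hB => Ga Da [_]; apply.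
  exact: der_rprem h.
- move=> K a S G D _ IH S0 pS.
  have h : der (Box K a :: Box H c :: S0) (a :: G) D.
    by apply: der_perm (IH (Box K a :: S0) _) _ _ _; perm_solve.
  exact: der_T h.
- move=> K b S Pi Om hS hPi hOm d S0 pS.
  apply: der_K hPi hOm _; first exact: boxes pS hS.
  move: d; have := bodies_below_perm K pS; rewrite !bodies_below_cons /=.
  case: (gset H \subset gset K) => p d; last by apply: der_perm d _ _ _; perm_solve.
  by apply: hc; apply: der_perm d _ _ _; perm_solve.
Qed.

Lemma der_lprem_inv2 A S G D :
  der S (A :: A :: G) D -> ~~ isAtomBotBox A -> lprem (lprem der A) A S G D.
Proof.
move=> d hA; apply: lprem_ctx (der_lprem_inv d hA) => Ga Da d'.
by apply: der_lprem_inv hA; apply: der_perm d' _ _ _; perm_solve.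
Qed.

Lemma der_rprem_inv2 A S G D :
  der S G (A :: A :: D) -> ~~ isAtomBotBox A -> rprem (rprem der A) A S G D.
Proof.
move=> d hA; apply: rprem_ctx (der_rprem_inv d hA) => Ga Da d'.
by apply: der_rprem_inv hA; apply: der_perm d' _ _ _; perm_solve.
Qed.

Lemma der_contr A :
  (forall S G D, der S (A :: A :: G) D -> der S (A :: G) D) /\
  (forall S G D, der S G (A :: A :: D) -> der S G (A :: D)).
Proof.
elim: A => [p | | a [La Ra] b [Lb Rb] | a [La Ra] b [Lb Rb] | a [La Ra] b [Lb Rb] | a [La Ra]
           | H c [Lc Rc]]; split=> S G D.
- exact: der_contrL_atom.
- exact: der_contrR_atom.
- exact: der_contrL_atom.
- exact: der_contrR_atom.
- move/der_lprem_inv2 => /(_ isT) /= d; apply: der_lprem => /=.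
  have {d} d : der S [:: b, b, a, a & G] D by apply: der_perm d _ _ _; perm_solve.
  by apply: La; apply: der_perm (Lb _ _ _ d) _ _ _; perm_solve.
- move/der_rprem_inv2 => /(_ isT) /= [[d _] [_ d']].
  by apply: der_rprem; split; [apply: Ra | apply: Rb].
- move/der_lprem_inv2 => /(_ isT) /= [[d _] [_ d']].
  by apply: der_lprem; split; [apply: La | apply: Lb].
- move/der_rprem_inv2 => /(_ isT) /= d; apply: der_rprem => /=.
  have {d} d : der S G [:: b, b, a, a & D] by apply: der_perm d _ _ _; perm_solve.
  by apply: Ra; apply: der_perm (Rb _ _ _ d) _ _ _; perm_solve.
- move/der_lprem_inv2 => /(_ isT) /= [[d _] [_ d']].
  by apply: der_lprem; split; [apply: Ra | apply: Lb].
- move/der_rprem_inv2 => /(_ isT) /= d.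
  by apply: der_rprem; apply: La; apply: Rb.
- by move/der_lprem_inv2 => /(_ isT) /= d; apply: der_lprem; apply: Ra.
- by move/der_rprem_inv2 => /(_ isT) /= d; apply: der_rprem; apply: La.
- move/der_T_inv => d; apply: der_T.
  have {d} d : der (Box H c :: S) (Box H c :: c :: G) D by apply: der_perm d _ _ _; perm_solve.
  have {d} d : der [:: Box H c, Box H c & S] (c :: c :: G) D.
    by apply: der_perm (der_T_inv d) _ _ _; perm_solve.
  by apply: der_contrS (Lc _ _ _ d) => Gam b; apply: Lc.
- exact: der_contrR_atom.
Qed.

Lemma der_contrL A S G D : der S (A :: A :: G) D -> der S (A :: G) D.
Proof. exact: (der_contr A).1. Qed.

Lemma der_contrR A S G D : der S G (A :: A :: D) -> der S G (A :: D).
Proof. exact: (der_contr A).2. Qed.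

Lemma der_contrL_cat Gam S G D : der S (Gam ++ Gam ++ G) D -> der S (Gam ++ G) D.
Proof.
elim: Gam G => // A Gam IH G d.
have d1 : der S (A :: A :: Gam ++ Gam ++ G) D by apply: der_perm d _ _ _; perm_solve.
have d2 : der S (Gam ++ Gam ++ A :: G) D by apply: der_perm (der_contrL d1) _ _ _; perm_solve.
by apply: der_perm (IH _ d2) _ _ _; perm_solve.
Qed.

Lemma der_contrR_cat Del S G D : der S G (Del ++ Del ++ D) -> der S G (Del ++ D).
Proof.
elim: Del D => // A Del IH D d.
have d1 : der S G (A :: A :: Del ++ Del ++ D) by apply: der_perm d _ _ _; perm_solve.
have d2 : der S G (Del ++ Del ++ A :: D) by apply: der_perm (der_contrR d1) _ _ _; perm_solve.
by apply: der_perm (IH _ d2) _ _ _; perm_solve.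
Qed.

(** * Cut *)

Lemma der_Bot_succ S G D : der S G (Bot :: D) -> der S G D.
Proof. by move=> d; apply: (@der_succ_elim Bot [::] [::] [::]) d. Qed.

Lemma bodies_below_split K S :
  perm_eq (map body S) (bodies_below K S ++ [seq body x | x <- S & ~~ below K x]).
Proof. by rewrite /bodies_below -map_cat perm_map // perm_sym perm_filterC. Qed.

Lemma der_T_succ H c S G D : der S G (Box H c :: D) -> der S (map body S ++ G) (c :: D).
Proof.
move=> d.
suff gen : forall S G D', der S G D' -> forall D, perm_eq D' (Box H c :: D) ->
    der S (map body S ++ G) (c :: D) by exact: gen _ _ _ d _ (perm_refl _).
clear d S G D; apply: der_canon_ind.
- move=> S G D S' G' D' pS pG pD IH D0 pD0; have pB := perm_map body pS.
  by apply: der_perm (IH D0 _) _ _ _; perm_solve.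
- move=> p S G D hS D0 /perm_cons_split [[] // | [r [_ pr]]].
  by apply: (@der_init_mem p); rewrite ?hS ?mem_cat ?inE ?(perm_mem pr) ?inE ?eqxx ?orbT.
- by move=> S G D hS D0 _; apply: der_bot_mem; rewrite ?hS ?mem_cat ?inE ?eqxx ?orbT.
- move=> A S G D hA D0 pD.
  have h : lprem der A S (map body S ++ G) (c :: D0).
    apply: lprem_ctx hA => Ga Da [_ IH].
    by apply: der_perm (IH (Da ++ D0) _) _ _ _; perm_solve.
  by apply: der_perm (der_lprem h) _ _ _; perm_solve.
- move=> B S G D hB D0 pD0.
  have [[eB _] | [r [pD pr]]] := perm_cons_split pD0; first by rewrite eB in hB.
  have h : rprem der B S (map body S ++ G) (c :: r).
    apply: rprem_ctx hB => Ga Da [_ IH].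
    by apply: der_perm (IH (Da ++ r) _) _ _ _; perm_solve.
  by apply: der_perm (der_rprem h) _ _ _; perm_solve.
- move=> K a S G D _ IH D0 pD /=.
  have h : der (Box K a :: S) (a :: a :: map body S ++ G) (c :: D0).
    by apply: der_perm (IH D0 pD) _ _ _; perm_solve.
  by apply: der_perm (der_T (der_contrL h)) _ _ _; perm_solve.
- move=> K b S Pi Om hS hPi hOm d D0 /perm_cons_split [[[eK eb] pOm] | [r [pOm pr]]].
  + subst K b; have pB := bodies_below_split H S.
    have := der_weaken ([seq body x | x <- S & ~~ below H x] ++ Pi) D0 hS d.
    by move/der_perm; apply; perm_solve.
  + have hr : all isAtomBotBox r by move: hOm; rewrite (perm_all _ pOm) => /andP [].
    have := @der_weaken [::] (map body S) [:: c] _ _ _ isT (der_K hS hPi hr d).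
    by move/der_perm; apply; perm_solve.
Qed.

Lemma der_cut_atom p S G D S' G' D' :
  der S G (Var p :: D) -> der S' (Var p :: G') D' -> der (S' ++ S) (G ++ G') (D ++ D').
Proof.
move=> d d'.
have e : der (S' ++ S) (G' ++ G) (D' ++ D).
  apply: (@der_succ_elim (Var p) S' G' D' S G D (der_boxes d')) d => // q S0 G0 D0 [<-] hS0.
  by apply: der_perm (der_weaken G0 D0 hS0 d') _ _ _; perm_solve.
by apply: der_perm e _ _ _; perm_solve.
Qed.

Definition cut_admissible lam := forall G D G' D',
  der [::] G (lam :: D) -> der [::] (lam :: G') D' -> der [::] (G ++ G') (D ++ D').

Lemma bodies_below_sub K0 K S : gset K0 \subset gset K ->
  perm_eq (bodies_below K S)
          (bodies_below K0 S ++ [seq body x | x <- S & below K x && ~~ below K0 x]).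
Proof.
move=> sub; elim: S => //= x S IH; rewrite !bodies_below_cons.
case h0: (below K0 x) => /=.
  have -> : below K x by case: x h0 => //= H a hH; apply: subset_trans hH sub.
  by rewrite perm_cons.
by case: (below K x) => //=; perm_solve.
Qed.

(** Cut_2 at a (D_K^+) step of the right premise that uses [D_K0 lam]. *)
Lemma der_cut_box_K K0 lam K b S' Pi Om S G D :
  cut_admissible lam -> gset K0 \subset gset K ->
  all isBox S' -> all isAtomBot Pi -> all isAtomBotBox Om ->
  der [::] (lam :: bodies_below K S') [:: b] ->
  der S G (Box K0 lam :: D) -> der (S' ++ S) (Pi ++ G) ((Box K b :: Om) ++ D).
Proof.
move=> cut_lam sub hS' hPi hOm db d.
apply: (@der_succ_elim (Box K0 lam) S' Pi (Box K b :: Om)) d => //.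
move=> K1 b1 S1 Pi1 Om1 [<- <-] hS1 hPi1 hOm1 d1.
have dc := cut_lam _ [::] _ _ d1 db.
apply: der_K; rewrite ?all_cat ?hS' ?hS1 ?hPi ?hPi1 ?hOm ?hOm1 //.
have pB := bodies_below_sub S1 sub; rewrite bodies_below_cat.
have := @der_weaken [::] [seq body x | x <- S1 & below K x && ~~ below K0 x] [::] _ _ _ isT dc.
by move/der_perm; apply; perm_solve.
Qed.

Lemma der_cut_box K0 lam S G D S' G' D' :
  cut_admissible lam ->
  der S G (Box K0 lam :: D) -> der (Box K0 lam :: S') G' D' -> der (S' ++ S) (G ++ G') (D ++ D').
Proof.
move=> cut_lam d d'; have hS := der_boxes d.
suff gen : forall T G' D', der T G' D' -> forall S', perm_eq T (Box K0 lam :: S') ->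
    der (S' ++ S) (G ++ G') (D ++ D') by exact: gen _ _ _ d' _ (perm_refl _).
clear d' S' G' D'.
have boxes T S' : perm_eq T (Box K0 lam :: S') -> all isBox T -> all isBox (S' ++ S).
  by move=> pT; rewrite all_cat hS andbT (perm_all _ pT) => /andP [].
apply: der_canon_ind.
- by move=> T G' D' T' G'' D'' pT pG pD IH S' pS; apply: der_perm (IH S' _) _ _ _; perm_solve.
- move=> p T G' D' hT S' /boxes /(_ hT) hS'.
  by apply: (@der_init_mem p); rewrite ?mem_cat ?inE ?eqxx ?orbT.
- move=> T G' D' hT S' /boxes /(_ hT) hS'.
  by apply: der_bot_mem; rewrite ?mem_cat ?inE ?eqxx ?orbT.
- move=> A T G' D' hA S' pT.
  have h : lprem der A (S' ++ S) (G ++ G') (D ++ D').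
    apply: lprem_ctx hA => Ga Da [_ IH].
    by apply: der_perm (IH S' pT) _ _ _; perm_solve.
  by apply: der_perm (der_lprem h) _ _ _; perm_solve.
- move=> A T G' D' hA S' pT.
  have h : rprem der A (S' ++ S) (G ++ G') (D ++ D').
    apply: rprem_ctx hA => Ga Da [_ IH].
    by apply: der_perm (IH S' pT) _ _ _; perm_solve.
  by apply: der_perm (der_rprem h) _ _ _; perm_solve.
- move=> K a T G' D' _ IH S' pT.
  have h : der (Box K a :: S' ++ S) (a :: G ++ G') (D ++ D').
    by apply: der_perm (IH (Box K a :: S') _) _ _ _; perm_solve.
  by apply: der_perm (der_T h) _ _ _; perm_solve.
- move=> K b T Pi Om hT hPi hOm db S' pT.
  have hS' : all isBox S' by move: hT; rewrite (perm_all _ pT) => /andP [].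
  have := bodies_below_perm K pT; rewrite bodies_below_cons /=.
  case: ifP => sub pB.
  + have db' : der [::] (lam :: bodies_below K S') [:: b] by apply: der_perm db _ _ _; perm_solve.
    by apply: der_perm (der_cut_box_K cut_lam sub hS' hPi hOm db' d) _ _ _; perm_solve.
  + have db' : der [::] (bodies_below K S') [:: b] by apply: der_perm db _ _ _; perm_solve.
    by apply: der_perm (der_weaken G D hS (der_K hS' hPi hOm db')) _ _ _; perm_solve.
Qed.

Lemma der_cut lam : cut_admissible lam.
Proof.
elim: lam => [p | | a IHa b IHb | a IHa b IHb | a IHa b IHb | a IHa | K c IHc] G D G' D' d d'.
- by apply: der_perm (der_cut_atom d d') _ _ _; perm_solve.
- by apply: der_perm (@der_weaken [::] G' D' _ _ _ isT (der_Bot_succ d)) _ _ _; perm_solve.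
- have [d1 d2] := der_rprem_inv d isT.
  have e1 := IHa _ _ _ _ d1 (der_lprem_inv d' isT).
  have e2 : der [::] (b :: G ++ G') (D ++ D') by apply: der_perm e1 _ _ _; perm_solve.
  exact/der_contrL_cat/der_contrR_cat/(IHb _ _ _ _ d2 e2).
- have [d'1 d'2] := der_lprem_inv d' isT.
  have e := IHb _ _ _ _ (IHa _ _ _ _ (der_rprem_inv d isT) d'1) d'2.
  have e' : der [::] (G' ++ G' ++ G) (D' ++ D' ++ D) by apply: der_perm e _ _ _; perm_solve.
  by apply: der_perm (der_contrR_cat (der_contrL_cat e')) _ _ _; perm_solve.
- have [d'1 d'2] := der_lprem_inv d' isT.
  have e := IHa _ _ _ _ d'1 (IHb _ _ _ _ (der_rprem_inv d isT) d'2).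
  have e' : der [::] (G' ++ G' ++ G) (D' ++ D' ++ D) by apply: der_perm e _ _ _; perm_solve.
  by apply: der_perm (der_contrR_cat (der_contrL_cat e')) _ _ _; perm_solve.
- have e := IHa _ _ _ _ (der_lprem_inv d' isT) (der_rprem_inv d isT).
  by apply: der_perm e _ _ _; perm_solve.
- have e1 := der_cut_box IHc d (der_T_inv d').
  have e2 : der [::] (c :: G ++ G') (D ++ D') by apply: der_perm e1 _ _ _; perm_solve.
  exact/der_contrL_cat/der_contrR_cat/(IHc _ _ _ _ (der_T_succ d) e2).
Qed.

End Calculus.

Theorem proposition6p12 (Agt : finType) (HAgt : 0 < #|Agt|) :
  (* (Cut_1) *)
  (forall (Gam Del Gam' Del' : seq (form Agt)) (lam : form Agt),
      der [::] Gam (Del ++ [:: lam]) ->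
      der [::] (lam :: Gam') Del' ->
      der [::] (Gam ++ Gam') (Del ++ Del'))
  /\
  (* (Cut_2) *)
  (forall (S S' Gam Del Gam' Del' : seq (form Agt)) (G : grp Agt) (lam : form Agt),
      all (@isBox Agt) S -> all (@isBox Agt) S' ->
      der S Gam (Del ++ [:: Box G lam]) ->
      der (Box G lam :: S') Gam' Del' ->
      der (S' ++ S) (Gam ++ Gam') (Del ++ Del')).
Proof.
split=> [Gam Del Gam' Del' lam d d' | S S' Gam Del Gam' Del' G lam _ _ d d'].
- have d1 : der [::] Gam (lam :: Del) by apply: der_perm d _ _ _; perm_solve.
  exact: der_cut d1 d'.
- have d1 : der S Gam (Box G lam :: Del) by apply: der_perm d _ _ _; perm_solve.
  exact: der_cut_box (der_cut (lam := lam)) d1 d'.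
Qed.
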